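(* Let $K$ be a field equipped with a field endomorphism $\sigma$, and for a matrix $E$ over $K$ and $j\in\mathbb{N}$ let $E^{(j)}$ denote the matrix obtained by applying $\sigma^j$ entrywise. Let $E_1,\ldots,E_t\in K^{p\times q}$ with $t\ge 1$. For each integer $k\ge 1$ let $M_k$ be the block matrix with $k$ block rows and $k+t-1$ block columns (each block of size $p\times q$) whose block in block row $a$ and block column $b$ ($0\le a\le k-1$, $0\le b\le k+t-2$) is $E_{b-a+1}^{(a)}$ if $0\le b-a\le t-1$ and the zero $p\times q$ matrix otherwise; i.e. \[M_k=\begin{pmatrix} E_1&E_2&\cdots&E_t&&&\\ &E_1^{(1)}&E_2^{(1)}&\cdots&E_t^{(1)}&&\\ &&\ddots&\ddots&\ddots&\ddots&\\ &&&E_1^{(k-1)}&E_2^{(k-1)}&\cdots&E_t^{(k-1)} \end{pmatrix}.\] Then there exist $d'\in\mathbb{N}$ and $s'\in\mathbb{Z}$ such that $\operatorname{rank}_K(M_k)=d'k+s'$ for all sufficiently large $k$. Moreover, the least $k_0$ such that $\operatorname{rank}_K(M_k)=d'k+s'$ holds for all $k\ge k_0$ is at most $(t-1)(\min\{p,q\}+1)$. *)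

From HB Require Import structures.
From mathcomp Require Import all_boot all_order all_algebra.
Set Implicit Arguments. Unset Strict Implicit. Unset Printing Implicit Defensive.
Import Order.TTheory GRing.Theory Num.Theory.
Local Open Scope ring_scope.

(* E : 'I_t -> 'M_(p,q) encodes E_1, ..., E_t (E_{l+1} = E l).
   sigmaj sigma j E = E^{(j)} : sigma^j applied entrywise. *)
Definition sigmaj (K : fieldType) (sigma : {rmorphism K -> K}) (j : nat)
  (p q : nat) (E : 'M[K]_(p, q)) : 'M[K]_(p, q) :=
  map_mx (iter j sigma) E.

Definition Mblock (K : fieldType) (sigma : {rmorphism K -> K}) (p q t : nat)
  (E : 'I_t -> 'M[K]_(p, q)) (a b : nat) : 'M[K]_(p, q) :=
  if (a <= b)%N then
    match (insub (b - a)%N : option 'I_t) with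
    | Some l => sigmaj sigma a (E l)
    | None => 0
    end
  else 0.

Definition Mk (K : fieldType) (sigma : {rmorphism K -> K}) (p q t : nat)
  (E : 'I_t -> 'M[K]_(p, q)) (k : nat) :=
  \mxblock_(a < k, b < k + t - 1) Mblock sigma E a b.

From mathcomp Require Import all_boot all_order all_algebra.
From mathcomp Require Import zify.
From Stdlib Require Import Classical.
Set Implicit Arguments. Unset Strict Implicit. Unset Printing Implicit Defensive.
Import Order.NatMonotonyTheory GRing.Theory.

(* Let r k = rank M_k. Deleting the first or the last block row of M_(k+2) leaves, up to zero
   columns and an application of sigma (which preserves rank), a copy of M_(k+1), and deleting
   both leaves M_k; the dimension formula for sums and intersections of row spaces then makes r
   concave. Its increments thus decrease to a limit d, first reached at some index J, so that
   r k = r J + d (k - J) for k >= J while (d + 1) J <= r J. On the other hand M_(a+t-1+b)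
   contains M_a and a shifted copy of M_b in block-diagonal position, so
   r a + r b <= r (a + t - 1 + b); iterating this against the linear growth gives
   r n <= d (n + t - 1). Hence J <= d (t - 1), and d <= min(p, q) because r 1 <= p and
   r k <= (k + t - 1) q. *)

Lemma nonincreasing_eventually_constant (g : nat -> nat) :
  (forall k, g k.+1 <= g k) -> exists K, forall k, K <= k -> g k = g K.
Proof.
move=> g_dec; have g_homo : {homo g : m n /~ m <= n} by apply: nonincnP.
suff drop_below v k0 : g k0 <= v -> exists2 K, k0 <= K & forall k, K <= k -> g k = g K.
  by have [K _ gK] := drop_below (g 0) 0 (leqnn _); exists K.
elim: v k0 => [|v IHv] k0 gk0.
  by exists k0 => // k /g_homo; lia.
have [[k [k0k gk]] | no_drop] := classic (exists k, k0 <= k /\ g k < g k0).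
  by have [|K kK gK] := IHv k; [lia | exists K => //; apply: leq_trans kK].
exists k0 => // k k0k; apply/eqP; rewrite eqn_leq g_homo // leqNgt.
by apply/negP => gk; apply: no_drop; exists k.
Qed.

Section ConcaveSequence.

Variable r : nat -> nat.
Hypothesis r0 : r 0 = 0.
Hypothesis r_nondecreasing : forall k, r k <= r k.+1.
Hypothesis r_concave : forall k, r k.+2 + r k <= r k.+1 + r k.+1.

Let incr k := r k.+1 - r k.

Lemma incr_nonincreasing : {homo incr : m n /~ m <= n}.
Proof.
apply: nonincnP => k.
by rewrite /incr; have := r_concave k; have := r_nondecreasing k.+1; lia.
Qed.

Lemma r_step k : r k.+1 = r k + incr k.
Proof. by rewrite /incr subnKC. Qed.

Lemma limit_slope_exists :
  exists d J, (forall k, J <= k -> incr k = d) /\ (forall k, k < J -> d < incr k).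
Proof.
have [K incrK] := nonincreasing_eventually_constant (fun k => incr_nonincreasing (leqnSn k)).
have incr_ge k : incr K <= incr k.
  by case: (leqP k K) => [/incr_nonincreasing // | /ltnW/incrK ->].
have [J /eqP incrJ J_min] := ex_minnP (ex_intro (fun j => incr j == incr K) K (eqxx _)).
exists (incr K), J; split=> k Jk.
  by apply/eqP; rewrite eqn_leq incr_ge -incrJ incr_nonincreasing.
rewrite ltn_neqAle incr_ge andbT; apply: contraTneq Jk => eqk.
by rewrite -leqNgt J_min // eqk.
Qed.

Section LimitSlope.

Variables d J : nat.
Hypothesis incr_after : forall k, J <= k -> incr k = d.
Hypothesis incr_before : forall k, k < J -> d < incr k.

Lemma slope_le_incr k : d <= incr k.
Proof. by case: (ltnP k J) => [/incr_before/ltnW | /incr_after ->]. Qed.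

Lemma slope_mul_le k : d * k <= r k.
Proof.
elim: k => [|k IHk]; first by rewrite r0 muln0.
by rewrite r_step mulnS; have := slope_le_incr k; lia.
Qed.

Lemma succ_slope_mul_le k : k <= J -> d.+1 * k <= r k.
Proof.
elim: k => [|k IHk] kJ; first by rewrite r0 muln0.
by rewrite r_step mulnS; have := incr_before kJ; have := IHk (ltnW kJ); lia.
Qed.

Lemma r_linear k : J <= k -> r k = r J + d * (k - J).
Proof.
have r_shift i : r (J + i) = r J + d * i.
  elim: i => [|i IHi]; first by rewrite addn0 muln0 addn0.
  by rewrite addnS r_step IHi incr_after ?leq_addr // mulnS; lia.
by move=> Jk; rewrite -{1}(subnKC Jk) r_shift.
Qed.

Variable c : nat.
Hypothesis r_superadditive : forall a b, r a + r b <= r (a + c + b).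

Lemma r_iter_superadditive n m : m.+1 * r n <= r (n + m * (n + c)).
Proof.
elim: m => [|m IHm]; first by rewrite mul1n mul0n addn0.
have := r_superadditive (n + m * (n + c)) n.
have -> : n + m * (n + c) + c + n = n + m.+1 * (n + c) by rewrite mulSn; lia.
by rewrite mulSn; lia.
Qed.

Lemma r_le_slope_mul n : r n <= d * (n + c).
Proof.
case: n => [|n]; first by rewrite r0.
set m := r J; set N := n.+1 + c.
have Jm : J <= m by have := succ_slope_mul_le (leqnn J); rewrite /m mulSn; lia.
have := r_iter_superadditive n.+1 m.
have mN : m <= m * N by rewrite leq_pmulr.
rewrite -/N [r (_ + _)]r_linear; last by lia.
have := leq_mul (leqnn d) (leq_subr J (n.+1 + m * N)).
move=> sub_le iter_le; rewrite leqNgt; apply/negP => /(leq_mul (leqnn m.+1)); nia.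
Qed.

Lemma limit_start_le : J <= d * c.
Proof.
have := r_le_slope_mul J; have := succ_slope_mul_le (leqnn J).
rewrite mulnDr mulSn; lia.
Qed.

Lemma slope_le_r1 : d <= r 1.
Proof. by have := slope_le_incr 0; rewrite /incr r0 subn0. Qed.

Lemma slope_le_linear_bound w : (forall k, r k <= (k + c) * w) -> d <= w.
Proof.
move=> r_le; rewrite leqNgt; apply/negP => wd.
have := r_le (c * w).+1; have := slope_mul_le (c * w).+1.
have := leq_mul wd (leqnn (c * w).+1); nia.
Qed.

End LimitSlope.

Lemma concave_superadditive_eventually_linear c p q :
    (forall a b, r a + r b <= r (a + c + b)) ->
    r 1 <= p -> (forall k, r k <= (k + c) * q) ->
  exists d J, J <= c * minn p q /\ forall k, J <= k -> r k = r J + d * (k - J).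
Proof.
move=> r_sup r1p r_le; have [d [J [after before]]] := limit_slope_exists.
exists d, J; split; last exact: r_linear.
apply: leq_trans (limit_start_le after before r_sup) _; rewrite mulnC leq_mul //.
rewrite leq_min (leq_trans (slope_le_r1 after before) r1p).
by rewrite (slope_le_linear_bound after before r_le).
Qed.

End ConcaveSequence.

Section CastLemmas.

Variable R : Type.

Lemma row_mx_castr m n1 n2 n2' (e : n2 = n2') (A : 'M[R]_(m, n1)) (B : 'M[R]_(m, n2)) :
  exists e', row_mx A (castmx (erefl, e) B) = castmx (erefl, e') (row_mx A B).
Proof. by case: n2' / e; exists erefl; rewrite !castmx_id. Qed.

Lemma col_mx_cast m1 m2 m2' n n' (em : m2 = m2') (en : n = n')
    (A : 'M[R]_(m1, n)) (B : 'M[R]_(m2, n)) :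
  exists e, col_mx (castmx (erefl, en) A) (castmx (em, en) B) = castmx (e, en) (col_mx A B).
Proof. by case: m2' / em; case: n' / en; exists erefl; rewrite !castmx_id. Qed.

Lemma row_mxA_castr m n1 n2 n3 n (e : n2 + n3 = n)
    (A : 'M[R]_(m, n1)) (B : 'M[R]_(m, n2)) (C : 'M[R]_(m, n3)) :
  exists e', row_mx A (castmx (erefl, e) (row_mx B C)) = castmx (erefl, e') (row_mx (row_mx A B) C).
Proof.
case: n / e; rewrite castmx_id row_mxA.
by exists (esym (addnA n1 n2 n3)); apply: eq_castmx.
Qed.

End CastLemmas.

Lemma mxrank_castmx (K : fieldType) m n m' n' (e : (m = m') * (n = n')) (A : 'M[K]_(m, n)) :
  \rank (castmx e A) = \rank A.
Proof. by case: e => em en; case: m' / em; case: n' / en; rewrite castmx_id. Qed.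

Section BlockMatrices.

Variables (R : nmodType) (p q : nat).
Implicit Types F : nat -> nat -> 'M[R]_(p, q).

Fixpoint block_row F a b n : 'M[R]_(p, n * q) :=
  match n return 'M[R]_(p, n * q) with
  | 0 => 0%R
  | n'.+1 => row_mx (F a b) (block_row F a b.+1 n')
  end.

Fixpoint block_col F a b k : 'M[R]_(k * p, q) :=
  match k return 'M[R]_(k * p, q) with
  | 0 => 0%R
  | k'.+1 => col_mx (F a b) (block_col F a.+1 b k')
  end.

Fixpoint blocks F a b k n : 'M[R]_(k * p, n * q) :=
  match k return 'M[R]_(k * p, n * q) with
  | 0 => 0%R
  | k'.+1 => col_mx (block_row F a b n) (blocks F a.+1 b k' n)
  end.

Lemma blocks_recl F a b k n :
  blocks F a b k n.+1 = row_mx (block_col F a b k) (blocks F a b.+1 k n).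
Proof.
elim: k a => [|k IHk] a /=; first by rewrite [LHS]flatmx0 [RHS]flatmx0.
by rewrite IHk -block_mxEh -block_mxEv.
Qed.

Lemma blocks_splitr F a b k n1 n2 : exists e,
  blocks F a b k (n1 + n2) =
    castmx (erefl, e) (row_mx (blocks F a b k n1) (blocks F a (b + n1) k n2)).
Proof.
elim: n1 b => [|n1 IHn1] b.
  by exists erefl; rewrite castmx_id addn0 row_thin_mx.
rewrite addSn blocks_recl; have [e ->] := IHn1 b.+1; rewrite addSnnS.
have [e' ->] := row_mxA_castr e (block_col F a b k) (blocks F a b.+1 k n1)
  (blocks F a (b + n1.+1) k n2).
by rewrite -blocks_recl; exists e'.
Qed.

Lemma block_row0 F a b n :
  (forall j, j < n -> F a (b + j) = 0%R) -> block_row F a b n = 0%R.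
Proof.
elim: n b => [|n IHn] b F0 /=; first by rewrite [LHS]thinmx0 [RHS]thinmx0.
rewrite IHn => [|j jn]; last by rewrite addSnnS F0.
by rewrite -[b]addn0 F0 // row_mx0.
Qed.

Lemma blocks0 F a b k n :
  (forall i j, i < k -> j < n -> F (a + i) (b + j) = 0%R) -> blocks F a b k n = 0%R.
Proof.
elim: k a => [|k IHk] a F0 /=; first by rewrite [LHS]flatmx0 [RHS]flatmx0.
rewrite IHk => [|i j ik jn]; last by rewrite addSnnS F0.
by rewrite block_row0 ?col_mx0 // => j jn; rewrite -[a]addn0 F0.
Qed.

Lemma block_row_shift F (g : R -> R) c a b n :
    (forall i j, F (i + c) (j + c) = map_mx g (F i j)) ->
  block_row F (a + c) (b + c) n = map_mx g (block_row F a b n).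
Proof.
move=> Fc; elim: n b => [|n IHn] b /=; first by rewrite [LHS]thinmx0 [RHS]thinmx0.
by rewrite map_row_mx Fc -addSn IHn.
Qed.

Lemma blocks_shift F (g : R -> R) c a b k n :
    (forall i j, F (i + c) (j + c) = map_mx g (F i j)) ->
  blocks F (a + c) (b + c) k n = map_mx g (blocks F a b k n).
Proof.
move=> Fc; elim: k a => [|k IHk] a /=; first by rewrite [LHS]flatmx0 [RHS]flatmx0.
by rewrite map_col_mx (block_row_shift _ _ _ Fc) -addSn IHk.
Qed.

Lemma mxrow_block_row F a b n : exists e,
  (\mxrow_(j < n) F a (b + j)%N)%R = castmx (erefl, e) (block_row F a b n).
Proof.
elim: n b => [|n IHn] b.
  have e : 0 * q = \sum_(j < 0) q by rewrite big_ord0.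
  exists e; apply/matrixP => i j; exfalso.
  by have := ltn_ord j; move: (nat_of_ord j) => x; rewrite big_ord0.
rewrite mxrow_recl.
have -> : (\mxrow_(j < n) F a (b + lift ord0 j)%N)%R = (\mxrow_(j < n) F a (b.+1 + j)%N)%R.
  by apply: eq_mxrow => j; rewrite /= /bump /= add1n addSnnS.
have [e ->] := IHn b.+1.
have [e' ->] := row_mx_castr e (F a (b + 0)) (block_row F a b.+1 n).
by rewrite castmx_comp addn0; exists (etrans e' mxsize_recl).
Qed.

Lemma mxblock_blocks F a b k n : exists e,
  (\mxblock_(i < k, j < n) F (a + i)%N (b + j)%N)%R = castmx e (blocks F a b k n).
Proof.
elim: k a => [|k IHk] a.
  have [en _] := mxrow_block_row F a b n.
  have e : 0 * p = \sum_(i < 0) p by rewrite big_ord0.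
  exists (e, en); apply/matrixP => i j; exfalso.
  by have := ltn_ord i; move: (nat_of_ord i) => x; rewrite big_ord0.
rewrite mxblock_recu.
have -> : (\mxblock_(i < k, j < n) F (a + lift ord0 i)%N (b + j)%N)%R =
          (\mxblock_(i < k, j < n) F (a.+1 + i)%N (b + j)%N)%R.
  by apply: eq_mxblock => i j; rewrite /= /bump /= add1n addSnnS.
have [[e1 e2] ->] := IHk a.+1.
have [e ->] := mxrow_block_row F (a + 0) b n.
rewrite (eq_castmx (erefl _, e) (erefl _, e2)).
have [e' ->] := col_mx_cast e1 e2 (block_row F (a + 0) b n) (blocks F a.+1 b k n).
by rewrite castmx_comp addn0; exists (etrans e' mxsize_recl, e2).
Qed.

End BlockMatrices.

Section BlockMatrixRank.

Variables (K : fieldType) (p q : nat).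
Implicit Types F : nat -> nat -> 'M[K]_(p, q).

Lemma mxrank_mxblock F a b k n :
  \rank (\mxblock_(i < k, j < n) F (a + i)%N (b + j)%N)%R = \rank (blocks F a b k n).
Proof. by have [e ->] := mxblock_blocks F a b k n; rewrite mxrank_castmx. Qed.

Lemma blocks_splitu F a b k1 k2 n :
  (blocks F a b (k1 + k2) n :=: blocks F a b k1 n + blocks F (a + k1) b k2 n)%MS.
Proof.
elim: k1 a => [|k1 IHk1] a; first by rewrite addn0; apply: eqmx_sym; apply: adds0mx.
rewrite /= -addSnnS; apply: eqmx_trans (eqmx_sym (addsmxE _ _)) _.
apply: eqmx_trans (adds_eqmx (eqmx_refl _) (IHk1 a.+1)) _.
by rewrite addsmxA; apply: adds_eqmx (addsmxE _ _) (eqmx_refl _).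
Qed.

Lemma mxrank_adds_submod m1 m2 m3 n (U : 'M[K]_(m1, n)) (V : 'M_(m2, n)) (W : 'M_(m3, n)) :
  \rank (U + V + W)%MS + \rank V <= \rank (U + V)%MS + \rank (V + W)%MS.
Proof.
have sub_sum : (U + V + W <= (U + V) + (V + W))%MS.
  rewrite !addsmx_sub -!andbA; apply/and3P; split.
  - exact: submx_trans (addsmxSl U V) (addsmxSl _ _).
  - exact: submx_trans (addsmxSr U V) (addsmxSl _ _).
  - exact: submx_trans (addsmxSr V W) (addsmxSr _ _).
have sub_cap : (V <= (U + V) :&: (V + W))%MS by rewrite sub_capmx addsmxSl addsmxSr.
have := mxrank_sum_cap (U + V)%MS (V + W)%MS.
by have := mxrankS sub_sum; have := mxrankS sub_cap; lia.
Qed.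

End BlockMatrixRank.

Section BandMatrix.

Variables (K : fieldType) (sigma : {rmorphism K -> K}) (p q t : nat).
Variable E : 'I_t -> 'M[K]_(p, q).
Local Notation B := (Mblock sigma E).
Local Notation rk k := (\rank (Mk sigma E k)).

Lemma mxrank_map_iter c m n (A : 'M[K]_(m, n)) : \rank (map_mx (iter c sigma) A) = \rank A.
Proof.
elim: c => [|c IHc]; first by congr (\rank _); apply/matrixP => i j; rewrite mxE.
rewrite -[RHS]IHc -[RHS](mxrank_map sigma) -map_mx_comp.
by congr (\rank _); apply: eq_map_mx => x.
Qed.

Lemma Mblock_shift a b c : B (a + c) (b + c) = map_mx (iter c sigma) (B a b).
Proof.
have iter0 : map_mx (iter c sigma) (0 : 'M[K]_(p, q)) = 0%R.
  by apply/matrixP => i j; rewrite !mxE; elim: c => //= c ->; rewrite rmorph0.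
rewrite /Mblock leq_add2r subnDr; case: ifP => _; last by rewrite iter0.
case: insubP => [l _ _|_]; last by rewrite iter0.
by apply/matrixP => i j; rewrite !mxE addnC iterD.
Qed.

Lemma Mblock_lower a b : b < a -> B a b = 0%R.
Proof. by rewrite /Mblock ltnNge => /negbTE ->. Qed.

Lemma Mblock_beyond_band a b : a + t <= b -> B a b = 0%R.
Proof.
move=> tb; rewrite /Mblock; case: ifP => // _.
by rewrite insubN // -leqNgt leq_subRL // (leq_trans _ tb) // leq_addr.
Qed.

Lemma blocks_Mblock_shift a b c k n :
  blocks B (a + c) (b + c) k n = map_mx (iter c sigma) (blocks B a b k n).
Proof. by apply: blocks_shift => i j; apply: Mblock_shift. Qed.

Lemma mxrank_Mk k : rk k = \rank (blocks B 0 0 k (k + t - 1)).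
Proof. exact: mxrank_mxblock B 0 0 k (k + t - 1). Qed.

(* Up to zero columns and an application of sigma^a, any k consecutive block rows of a wide
   enough band matrix are M_k. *)
Lemma mxrank_blocks_window a k n : k + t - 1 <= n -> \rank (blocks B a 0 k (a + n)) = rk k.
Proof.
move=> kn; have [e ->] := blocks_splitr B a 0 k a n.
rewrite mxrank_castmx blocks0 ?rank_row_0mx; last by move=> i j _ ja; apply: Mblock_lower; lia.
rewrite (blocks_Mblock_shift 0 0) mxrank_map_iter -(subnKC kn).
have [e' ->] := blocks_splitr B 0 0 k (k + t - 1) (n - (k + t - 1)).
rewrite mxrank_castmx [blocks B 0 (0 + _) _ _]blocks0 ?rank_row_mx0 -?mxrank_Mk //.
by move=> i j ik _; apply: Mblock_beyond_band; lia.
Qed.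

Lemma mxrank_Mk0 : rk 0 = 0.
Proof. by rewrite mxrank_Mk mxrank0. Qed.

Lemma mxrank_Mk_nondecreasing k : rk k <= rk k.+1.
Proof.
rewrite -(mxrank_blocks_window 1 (n := k + t)) ?leq_subr //.
rewrite -(mxrank_blocks_window 0 (k := 1 + k) (n := (k + t).+1)); last by lia.
by rewrite (blocks_splitu B 0 0 1 k) mxrankS ?addsmxSr.
Qed.

Lemma mxrank_Mk_concave k : rk k.+2 + rk k <= rk k.+1 + rk k.+1.
Proof.
set N := (k + t).+1.
have top_mid : \rank (blocks B 0 0 1 N + blocks B 1 0 k N)%MS = rk k.+1.
  by rewrite -(mxrank_blocks_window 0 (k := 1 + k) (n := N)) ?(blocks_splitu B 0 0 1 k) //; lia.
have mid_bot : \rank (blocks B 1 0 k N + blocks B (1 + k) 0 1 N)%MS = rk k.+1.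
  rewrite -[k.+1]addn1 -(mxrank_blocks_window 1 (k := k + 1) (n := k + t)); last by lia.
  by rewrite (blocks_splitu B 1 0 k 1).
have mid : \rank (blocks B 1 0 k N) = rk k.
  by rewrite (mxrank_blocks_window 1 (n := k + t)) ?leq_subr.
have all : \rank (blocks B 0 0 1 N + blocks B 1 0 k N + blocks B (1 + k) 0 1 N)%MS = rk k.+2.
  rewrite -[k.+2]addn1 -[k.+1]add1n.
  rewrite -(mxrank_blocks_window 0 (k := 1 + k + 1) (n := N)); last by lia.
  rewrite (blocks_splitu B 0 0 (1 + k) 1).
  by rewrite (adds_eqmx (blocks_splitu B 0 0 1 k N) (eqmx_refl _)).
by have := mxrank_adds_submod (blocks B 0 0 1 N) (blocks B 1 0 k N) (blocks B (1 + k) 0 1 N); lia.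
Qed.

(* M_(a + t - 1 + b) contains M_a and sigma^(a + t - 1)(M_b) as diagonal blocks of a
   block-diagonal submatrix. *)
Lemma mxrank_Mk_superadditive a b : 1 <= t -> rk a + rk b <= rk (a + (t - 1) + b).
Proof.
move=> t_gt0; set c := a + t - 1.
have -> : a + (t - 1) = c by rewrite /c; lia.
set N := c + (b + t - 1).
rewrite -(mxrank_blocks_window 0 (k := c + b) (n := N)); last by rewrite /N /c; lia.
have sub : (blocks B 0 0 a N + blocks B c 0 b N <= blocks B 0 0 (c + b) N)%MS.
  rewrite (blocks_splitu B 0 0 c b) addsmxS //.
  by rewrite -[c](subnKC (_ : a <= c)) ?(blocks_splitu B 0 0 a) ?addsmxSl //; lia.
apply: leq_trans (mxrankS sub); rewrite addsmxE.
have [e1 ->] := blocks_splitr B 0 0 a c (b + t - 1).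
have [e2 ->] := blocks_splitr B c 0 b c (b + t - 1).
rewrite [blocks B 0 (0 + c) _ _]blocks0; last by move=> i j ia _; apply: Mblock_beyond_band; lia.
rewrite [blocks B c 0 b c]blocks0; last by move=> i j _ jc; apply: Mblock_lower; lia.
rewrite (eq_castmx (erefl _, e2) (erefl _, e1)) -cast_col_mx mxrank_castmx -block_mxEv.
rewrite rank_diag_block_mx (blocks_Mblock_shift 0 0 c b) mxrank_map_iter.
by rewrite !mxrank_Mk.
Qed.

Lemma mxrank_Mk1 : rk 1 <= p.
Proof. by rewrite mxrank_Mk (leq_trans (rank_leq_row _)) // mul1n. Qed.

Lemma mxrank_Mk_le_cols k : 1 <= t -> rk k <= (k + (t - 1)) * q.
Proof. by move=> t_gt0; rewrite mxrank_Mk -addnBA //; apply: rank_leq_col. Qed.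

End BandMatrix.

Local Open Scope ring_scope.

Theorem mainTheorem2 (K : fieldType) (sigma : {rmorphism K -> K})
  (p q t : nat) (ht : (1 <= t)%N) (E : 'I_t -> 'M[K]_(p, q)) :
  exists (d : nat) (s : int),
    (exists k1 : nat, forall k : nat, (k1 <= k)%N ->
        (\rank (Mk sigma E k))%:Z = (d * k)%:Z + s) /\
    (forall k : nat, (1 <= k)%N -> ((t - 1) * (minn p q + 1) <= k)%N ->
        (\rank (Mk sigma E k))%:Z = (d * k)%:Z + s).
Proof.
have [d [J [J_le rank_linear]]] : exists d J, (J <= (t - 1) * minn p q)%N /\
    forall k, (J <= k)%N -> \rank (Mk sigma E k) = (\rank (Mk sigma E J) + d * (k - J))%N.
  apply: concave_superadditive_eventually_linear.
  - exact: mxrank_Mk0.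
  - exact: mxrank_Mk_nondecreasing.
  - exact: mxrank_Mk_concave.
  - by move=> a b; apply: mxrank_Mk_superadditive.
  - exact: mxrank_Mk1.
  - by move=> k; apply: mxrank_Mk_le_cols.
exists d, ((\rank (Mk sigma E J))%:Z - (d * J)%:Z).
have rank_eq k : (J <= k)%N ->
    (\rank (Mk sigma E k))%:Z = (d * k)%:Z + ((\rank (Mk sigma E J))%:Z - (d * J)%:Z).
  move=> Jk; have dk : (d * k = d * J + d * (k - J))%N by rewrite -mulnDr subnKC.
  by rewrite rank_linear // dk !PoszD; lia.
split=> [|k _ k_ge]; first by exists J.
by apply: rank_eq; apply: leq_trans J_le (leq_trans _ k_ge); rewrite leq_mul2l addn1 leqnSn orbT.
Qed.
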